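(* (1) The mapping $F\colon(\mathcal{H}\times\mathcal{H})\setminus\Delta\to T^*\mathcal{H}$ defined by \begin{equation} F(p,q)=(q,\alpha_{(p,q)}) \end{equation} provides a diffeomorphism between $(\mathcal{H}\times\mathcal{H})\setminus\Delta$ and $T^*\mathcal{H}\setminus 0_\mathcal{H}$, where $0_\mathcal{H}$ denotes the zero section. (2) The real part of $\Omega_{\mathcal{H}}$ is equal to the pullback of the canonical symplectic form on $T^*\mathcal{H}$ by $F$.
   Context: $\mathcal{H}=\mathbb{C}\times\mathbb{R}$ is the 3-dimensional Heisenberg group with coordinates $(z,u)=(x,y,u)$ and group law $(z,u)\cdot(z',u')=(z+z',u+u'-\tfrac{1}{2}\Im(z\overline{z'}))$; $\Delta$ is the diagonal of $\mathcal{H}\times\mathcal{H}$. For $p=(z,u)$ let $A(p)=|z|^2-4iu$, and $\rho(p,q)=A(p^{-1}q)$. Define the complex 2-form $\Omega_{\mathcal{H}}=d_pd_q\log\rho$ and the real 1-form $\alpha=\Re d_q\log\rho$ on $(\mathcal{H}\times\mathcal{H})\setminus\Delta$ (here $d_p,d_q$ are exterior derivatives in the first and second factors); for fixed $p$, $\alpha_{(p,\cdot)}$ is a 1-form on $\mathcal{H}\setminus\{p\}$, so $\alpha_{(p,q)}\in T^*_q\mathcal{H}$. *)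

From HB Require Import structures.
From mathcomp Require Import all_boot all_order all_algebra.
From mathcomp Require Import all_classical all_reals all_analysis.
Set Implicit Arguments. Unset Strict Implicit. Unset Printing Implicit Defensive.
Import Order.TTheory GRing.Theory Num.Theory.
Import numFieldNormedType.Exports.
Local Open Scope classical_set_scope.
Local Open Scope ring_scope.

Section Heisenberg.
Variable R : realType.

Definition cplx := (R * R)%type.
Definition cmul (a b : cplx) : cplx := (a.1 * b.1 - a.2 * b.2, a.1 * b.2 + a.2 * b.1).
Definition cdiv (a b : cplx) : cplx :=
  ((a.1 * b.1 + a.2 * b.2) / (b.1 ^+ 2 + b.2 ^+ 2),
   (a.2 * b.1 - a.1 * b.2) / (b.1 ^+ 2 + b.2 ^+ 2)).
Definition cRe (a : cplx) : R := a.1.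
Definition cIm (a : cplx) : R := a.2.

(** The Heisenberg group H = C x R, point (z,u) = ((x,y),u). *)
Definition heis := (cplx * R)%type.
(* (z,u).(z',u') = (z+z', u+u' - 1/2 Im(z conj z')) *)
Definition hmul (p q : heis) : heis :=
  ((p.1.1 + q.1.1, p.1.2 + q.1.2),
   p.2 + q.2 - 2^-1 * cIm (cmul p.1 (q.1.1, - q.1.2))).
Definition hinv (p : heis) : heis := ((- p.1.1, - p.1.2), - p.2).
Definition Afun (p : heis) : cplx := (p.1.1 ^+ 2 + p.1.2 ^+ 2, - (4 * p.2)).
Definition rho (p q : heis) : cplx := Afun (hmul (hinv p) q).

(** Coordinates on H x H = R^6 : (x,y,u) of p are entries 0,1,2 and
    (x',y',u') of q are entries 3,4,5 of a row vector in 'rV[R]_6.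
    The same row-vector type models T*H = H x R^3 : entries 0,1,2 are the
    base point q = (x,y,u), entries 3,4,5 the covector components in the
    basis dx, dy, du. *)
Definition pt6 := 'rV[R]_6.
Definition c6 (i : nat) : 'I_6 := inord i.
Definition first (X : pt6) : heis := ((X 0 (c6 0), X 0 (c6 1)), X 0 (c6 2)).
Definition second (X : pt6) : heis := ((X 0 (c6 3), X 0 (c6 4)), X 0 (c6 5)).
Definition mk6 (a b : heis) : pt6 :=
  \row_(k < 6) [:: a.1.1; a.1.2; a.2; b.1.1; b.1.2; b.2]`_k.
Definition e6 (k : nat) : pt6 := \row_(l < 6) (if (l : nat) == k then 1 else 0).

Definition offdiag : set pt6 := [set X | first X <> second X].
Definition nonzero_cov : set pt6 :=
  [set Y | Y 0 (c6 3) <> 0 \/ Y 0 (c6 4) <> 0 \/ Y 0 (c6 5) <> 0].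

Definition rho6 (X : pt6) : cplx := rho (first X) (second X).

Definition cpartial (f : pt6 -> cplx) (k : nat) (X : pt6) : cplx :=
  ('D_(e6 k) (fun Y => cRe (f Y)) X, 'D_(e6 k) (fun Y => cIm (f Y)) X).

(** j-th component (j = 0,1,2 for dx', dy', du') of d_q log rho
    = (d_q rho) / rho. *)
Definition dqlog (j : nat) (X : pt6) : cplx := cdiv (cpartial rho6 (3 + j) X) (rho6 X).

Definition alpha (j : nat) (X : pt6) : R := cRe (dqlog j X).

(** Omega_H = d_p d_q log rho = sum_{i,j} Omega_ij dp_i /\ dq_j,
    Omega_ij = d/dp_i ( d_q log rho )_j. *)
Definition OmegaCoef (i j : nat) (X : pt6) : cplx := cpartial (dqlog j) i X.

Definition ReOmega (X a b : pt6) : R :=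
  \sum_(i < 3) \sum_(j < 3)
     cRe (OmegaCoef i j X) *
       (a 0 (c6 i) * b 0 (c6 (3 + j)) - b 0 (c6 i) * a 0 (c6 (3 + j))).

Definition Fmap (X : pt6) : pt6 :=
  mk6 (second X) ((alpha 0 X, alpha 1 X), alpha 2 X).

(** Canonical symplectic form on T*H = d(theta), theta = sum xi_j dq_j,
    i.e. omega = sum_j dxi_j /\ dq_j, at any point, on vectors c d. *)
Definition omega_can (c d : pt6) : R :=
  \sum_(j < 3) (c 0 (c6 (3 + j)) * d 0 (c6 j) - d 0 (c6 (3 + j)) * c 0 (c6 j)).

End Heisenberg.

Fixpoint Ck (R : realType) (V W : normedModType R) (k : nat) (U : set V) (f : V -> W)
  {struct k} : Prop :=
  match k with
  | 0 => forall x, U x -> {for x, continuous f}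
  | k'.+1 => (forall x, U x -> differentiable f x) /\
             (forall v : V, Ck k' U (fun x => 'D_v f x))
  end.

Definition smooth_on (R : realType) (V W : normedModType R) (U : set V) (f : V -> W) :=
  forall k, Ck k U f.

(* The components of alpha_(p,q) on the left-invariant frame at q depend only
   on h = p^-1 q: writing h = (zeta, w) and rho = A(h) = |zeta|^2 - 4 i w, they
   are (2 zeta / rho, -4 Im rho / |rho|^2), and this map from H \ {0} to
   R^3 \ {0} has an explicit rational inverse. Hence F is a bijection, with
   inverse (q, xi) |-> (q h^-1, q) where h is recovered from the frame
   components of xi. All coordinates of F and of its inverse are rational
   functions whose denominators do not vanish on the relevant open set, and
   this class of functions is closed under directional derivatives, so both
   maps are smooth.
   For (2), alpha_j = (1/2) d/dq_j log |rho|^2 is a q-gradient, so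
   d/dq_k alpha_j is symmetric in j and k. Hence the q-q terms of
   F^* omega = sum_j d alpha_j /\ dq_j cancel, and what remains is
   sum_(i,j) d/dp_i alpha_j dp_i /\ dq_j = Re d_p d_q log rho. *)

From HB Require Import structures.
From mathcomp Require Import all_boot all_order all_algebra.
From mathcomp Require Import all_classical all_reals all_analysis.
From mathcomp Require Import ring lra.
Set Implicit Arguments. Unset Strict Implicit. Unset Printing Implicit Defensive.
Import Order.TTheory GRing.Theory Num.Theory.
Import numFieldNormedType.Exports.
Local Open Scope classical_set_scope.
Local Open Scope ring_scope.

(** * Rational functions and smoothness *)

Section NearEqDifferentiable.
Variables (R : realType) (V W : normedModType R).

Lemma near_eq0_differentiable (h : V -> W) x :
  (\forall y \near x, h y = 0) -> differentiable h x.
Proof.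
move=> h0; have hx0 : h x = 0 by exact: nbhs_singleton h0.
have hdiff : h \o shift x = cst (h x) + \0 +o_ 0 id.
  apply/eqaddoE; rewrite funeqE => y /=; rewrite hx0 !add0r littleoE //.
  move=> _/posnumP[eps].
  have : \forall z \near (0 : V), h (z + x) = 0.
    by move: h0; rewrite (near_shift 0) /= subr0.
  by apply: filterS => z /= ->; rewrite normr0 mulr_ge0.
have dh0 : 'd h x = \0 :> (V -> W) by apply/diff_unique => //; exact: cst_continuous.
by apply/diff_locallyP; rewrite dh0; split => //; exact: cst_continuous.
Qed.

Lemma near_eq_differentiable (f g : V -> W) x :
  (\forall y \near x, f y = g y) -> differentiable g x -> differentiable f x.
Proof.
move=> fg dg; have -> : f = g + (f - g) by apply/funext => y /=; rewrite addrC subrK.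
apply: differentiableD => //; apply: near_eq0_differentiable.
by apply: filterS fg => y fgy; rewrite !fctE fgy subrr.
Qed.

End NearEqDifferentiable.

Section RowValued.
Variables (R : realType) (V : normedModType R) (m : nat).

Lemma differentiable_row (F : V -> 'rV[R]_m) x :
  (forall j, differentiable (fun y => F y 0 j) x) -> differentiable F x.
Proof.
move=> dF; have -> : F = \sum_(j < m) (fun y => F y 0 j *: (delta_mx 0 j : 'rV[R]_m)).
  by rewrite fct_sumE; apply/funext => y; rewrite [LHS]row_sum_delta.
by apply: differentiable_sum => j; exact: differentiableZl.
Qed.

Lemma derive_row (F : V -> 'rV[R]_m) x v j : differentiable F x ->
  'D_v F x 0 j = 'D_v (fun y => F y 0 j) x.
Proof. by move=> /diff_derivable dF; rewrite derive_mx // mxE. Qed.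

End RowValued.

Lemma derive_coord (R : realType) n (X v : 'rV[R]_n) i :
  'D_v (fun Y : 'rV[R]_n => Y 0 i) X = v 0 i.
Proof.
have := @derive_mx _ _ 1 n id X v (@derivable_id _ _ X v).
by rewrite derive_id => /matrixP/(_ 0 i); rewrite mxE => ->.
Qed.

Lemma derive_row_sum (R : realType) (W : normedModType R) n (f : 'rV[R]_n -> W) x v :
  differentiable f x -> 'D_v f x = \sum_(k < n) v 0 k *: 'D_(delta_mx 0 k) f x.
Proof.
move=> df; rewrite deriveE // {1}(row_sum_delta v) linear_sum.
by apply: eq_bigr => k _; rewrite linearZ deriveE.
Qed.

Section RationalExpressions.
Variables (R : realType) (n : nat).
Implicit Types (X v : 'rV[R]_n).

Inductive rexpr : Type :=
  | RVar of 'I_n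
  | RConst of R
  | RAdd of rexpr & rexpr
  | RMul of rexpr & rexpr
  | ROpp of rexpr
  | RInv of rexpr.

Fixpoint reval (e : rexpr) X : R :=
  match e with
  | RVar i => X 0 i
  | RConst c => c
  | RAdd a b => reval a X + reval b X
  | RMul a b => reval a X * reval b X
  | ROpp a => - reval a X
  | RInv a => (reval a X)^-1
  end.

Fixpoint rdefined (e : rexpr) X : Prop :=
  match e with
  | RVar _ | RConst _ => True
  | RAdd a b | RMul a b => rdefined a X /\ rdefined b X
  | ROpp a => rdefined a X
  | RInv a => reval a X != 0 /\ rdefined a X
  end.

Fixpoint rderiv (e : rexpr) v : rexpr :=
  match e with
  | RVar i => RConst (v 0 i)
  | RConst _ => RConst 0
  | RAdd a b => RAdd (rderiv a v) (rderiv b v)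
  | RMul a b => RAdd (RMul (rderiv a v) b) (RMul a (rderiv b v))
  | ROpp a => ROpp (rderiv a v)
  | RInv a => ROpp (RMul (rderiv a v) (RMul (RInv a) (RInv a)))
  end.

Lemma rdefined_rderiv e v X : rdefined e X -> rdefined (rderiv e v) X.
Proof. by elim: e => //= *; tauto. Qed.

Lemma reval_differentiable e X : rdefined e X -> differentiable (reval e) X.
Proof.
elim: e => /= [i|c|a IHa b IHb|a IHa b IHb|a IHa|a IHa].
- by move=> _; exact: differentiable_coord.
- by move=> _; exact: differentiable_cst.
- by case=> da db; apply: differentiableD; [exact: IHa|exact: IHb].
- by case=> da db; apply: differentiableM; [exact: IHa|exact: IHb].
- by move=> da; apply: differentiableN; exact: IHa.
- by case=> a0 da; apply: differentiableV => //; exact: IHa.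
Qed.

Lemma reval_derive e X v : rdefined e X -> 'D_v (reval e) X = reval (rderiv e v) X.
Proof.
have dable a : rdefined a X -> derivable (reval a) X v.
  by move=> /reval_differentiable/diff_derivable.
elim: e => /= [i|c|a IHa b IHb|a IHa b IHb|a IHa|a IHa].
- by move=> _; exact: derive_coord.
- by move=> _; exact: derive_cst.
- by case=> da db; rewrite deriveD ?IHa ?IHb //; exact: dable.
- case=> da db; rewrite deriveM ?IHa ?IHb //; [|exact: dable..].
  by rewrite addrC [_ * reval b X]mulrC.
- by move=> da; rewrite deriveN ?IHa //; exact: dable.
- case=> a0 da; rewrite deriveV ?IHa //; [|exact: dable].
  by rewrite scaleNr -exprVn expr2; congr (- _); exact: mulrC.
Qed.

(* No definedness hypothesis: both sides are the same polynomial in the values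
   of subterms and of their inverses. *)
Lemma reval_rderivC e u v X :
  reval (rderiv (rderiv e u) v) X = reval (rderiv (rderiv e v) u) X.
Proof. by elim: e => /= [i|c|a IHa b IHb|a IHa b IHb|a IHa|a IHa]; rewrite ?IHa ?IHb; ring. Qed.

Definition rlogderiv (e : rexpr) v : rexpr := RMul (rderiv e v) (RInv e).

Lemma reval_rderiv_logderivC e u v X :
  reval (rderiv (rlogderiv e u) v) X = reval (rderiv (rlogderiv e v) u) X.
Proof. by rewrite /= reval_rderivC; ring. Qed.

Lemma reval_rderiv_scale c e v X :
  reval (rderiv (RMul (RConst c) e) v) X = c * reval (rderiv e v) X.
Proof. by rewrite /=; ring. Qed.

Definition rational_on (U : set 'rV[R]_n) (f : 'rV[R]_n -> R) :=
  exists e, forall X, U X -> rdefined e X /\ f X = reval e X.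

Section RationalOn.
Variable U : set 'rV[R]_n.
Implicit Types f g : 'rV[R]_n -> R.

Lemma rational_on_cst c : rational_on U (fun => c).
Proof. by exists (RConst c). Qed.

Lemma rational_on_coord i : rational_on U (fun X => X 0 i).
Proof. by exists (RVar i). Qed.

Lemma rational_onD f g :
  rational_on U f -> rational_on U g -> rational_on U (fun X => f X + g X).
Proof.
move=> [a fa] [b gb]; exists (RAdd a b) => X UX.
by have [da ->] := fa X UX; have [db ->] := gb X UX.
Qed.

Lemma rational_onM f g :
  rational_on U f -> rational_on U g -> rational_on U (fun X => f X * g X).
Proof.
move=> [a fa] [b gb]; exists (RMul a b) => X UX.
by have [da ->] := fa X UX; have [db ->] := gb X UX.
Qed.

Lemma rational_onN f : rational_on U f -> rational_on U (fun X => - f X).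
Proof. by move=> [a fa]; exists (ROpp a) => X UX; have [da ->] := fa X UX. Qed.

Lemma rational_onV f : (forall X, U X -> f X != 0) ->
  rational_on U f -> rational_on U (fun X => (f X)^-1).
Proof.
move=> f0 [a fa]; exists (RInv a) => X UX.
by have [da fX] := fa X UX; rewrite /= -fX f0.
Qed.

Lemma rational_onX f k : rational_on U f -> rational_on U (fun X => f X ^+ k).
Proof.
move=> rf; elim: k => [|k IHk]; first exact: rational_on_cst.
by under eq_fun do rewrite exprS; exact: rational_onM.
Qed.

Hypothesis oU : open U.

Lemma near_reval f e X : (forall Y, U Y -> rdefined e Y /\ f Y = reval e Y) -> U X ->
  \forall Y \near X, f Y = reval e Y.
Proof. by move=> fe UX; apply: filterS (open_nbhs_nbhs (conj oU UX)) => Y /fe[]. Qed.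

Lemma rational_on_differentiable f X : rational_on U f -> U X -> differentiable f X.
Proof.
move=> [e fe] UX; have [de _] := fe X UX.
exact: near_eq_differentiable (near_reval fe UX) (reval_differentiable de).
Qed.

Lemma rational_on_derive f v : rational_on U f -> rational_on U ('D_v f).
Proof.
move=> [e fe]; exists (rderiv e v) => X UX; have [de _] := fe X UX.
split; first exact: rdefined_rderiv.
by rewrite -reval_derive //; apply: near_eq_derive; exact: near_reval fe UX.
Qed.

Lemma rational_rows_smooth m (F : 'rV[R]_n -> 'rV[R]_m) :
  (forall j, rational_on U (fun X => F X 0 j)) -> smooth_on U F.
Proof.
move=> rF k; elim: k F rF => [|k IHk] F rF.
  move=> X UX; apply/differentiable_continuous/differentiable_row => j.
  exact: rational_on_differentiable.
have dF X : U X -> differentiable F X.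
  by move=> UX; apply: differentiable_row => j; exact: rational_on_differentiable.
split=> // v; apply: IHk => j.
have [e fe] := rational_on_derive v (rF j); exists e => X UX.
by rewrite derive_row; [exact: fe|exact: dF].
Qed.

End RationalOn.

Lemma rational_on_open_neq0 f : rational_on setT f -> open [set X | f X != 0].
Proof.
move=> rf; apply: (@open_comp _ _ f [set r : R | r != 0]); last exact: open_neq.
by move=> X _; apply/differentiable_continuous/(rational_on_differentiable openT rf).
Qed.

End RationalExpressions.

Arguments RVar {R n}.
Arguments RConst {R n}.

(* Re (f' / f) = (1/2) (|f|^2)' / |f|^2 for f = a + i b. *)
Lemma reval_re_logderiv (R : realType) n (a b : rexpr R n) v X :
  reval (RMul (RConst 2^-1) (rlogderiv (RAdd (RMul a a) (RMul b b)) v)) X =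
  cRe (cdiv (reval (rderiv a v) X, reval (rderiv b v) X) (reval a X, reval b X)).
Proof. by rewrite /cdiv /cRe /= !expr2 mulrA; congr (_ * _); field. Qed.

(* The terms with k >= 3 cancel by the symmetry of d. *)
Lemma pullback_pairing_sum (R : comPzRingType) (d : nat -> nat -> R) (A B : nat -> R) :
  (forall j k, d (3 + k)%N j = d (3 + j)%N k) ->
  \sum_(j < 3) ((\sum_(k < 6) A k * d k j) * B (3 + j)%N -
                (\sum_(k < 6) B k * d k j) * A (3 + j)%N) =
  \sum_(i < 3) \sum_(j < 3) d i j * (A i * B (3 + j)%N - B i * A (3 + j)%N).
Proof.
move=> dsym; rewrite !big_ord_recr !big_ord0 /=.
by rewrite (dsym 0%N 1%N) (dsym 0%N 2%N) (dsym 1%N 2%N); ring.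
Qed.

(** * The Heisenberg group *)

Section Heisenberg.
Variable R : realType.
Local Notation R3 := (R * R * R)%type.
Implicit Types (p q h : heis R) (a xi : R3) (X Y v : pt6 R).

Lemma hmul_hinv_eq0 p q : hmul (hinv p) q = (0, 0, 0) -> p = q.
Proof.
move: p q => [[x y] u] [[x' y'] u'].
rewrite /hmul /hinv /cIm /cmul /= => -[ex ey eu].
have ? : x' = x by lra.
have ? : y' = y by lra.
by subst x' y'; congr (_, _, _); rewrite -[u']subr0 -eu; ring.
Qed.

Lemma hmulVh q : hmul (hinv q) q = (0, 0, 0).
Proof. by move: q => [[? ?] ?]; rewrite /hmul /hinv /cIm /cmul /=; congr (_, _, _); ring. Qed.

Lemma hmul_hinvKV p q : hmul q (hinv (hmul (hinv p) q)) = p.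
Proof.
by move: p q => [[? ?] ?] [[? ?] ?]; rewrite /hmul /hinv /cIm /cmul /=; congr (_, _, _); ring.
Qed.

Lemma hinv_hmulK q h : hmul (hinv (hmul q (hinv h))) q = h.
Proof.
by move: q h => [[? ?] ?] [[? ?] ?]; rewrite /hmul /hinv /cIm /cmul /=; congr (_, _, _); ring.
Qed.

(* The values of a covector at q = (x, y, u) on the left-invariant frame
   d/dx - (y/2) d/du, d/dy + (x/2) d/du, d/du. *)
Definition to_frame q xi : R3 :=
  (xi.1.1 - xi.2 * q.1.2 / 2, xi.1.2 + xi.2 * q.1.1 / 2, xi.2).

Definition of_frame q a : R3 :=
  (a.1.1 + a.2 * q.1.2 / 2, a.1.2 - a.2 * q.1.1 / 2, a.2).

Lemma to_frameK q : cancel (to_frame q) (of_frame q).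
Proof. by move=> [[? ?] ?]; rewrite /to_frame /of_frame /=; congr (_, _, _); ring. Qed.

Lemma to_frame_eq0 q xi : to_frame q xi = (0, 0, 0) <-> xi = (0, 0, 0).
Proof.
move: xi => [[a b] c]; rewrite /to_frame /=; split=> -[ea eb ec]; subst c.
  by congr (_, _, _); lra.
by subst; congr (_, _, _); ring.
Qed.

Definition anorm2 h : R := (Afun h).1 ^+ 2 + (Afun h).2 ^+ 2.

(* alpha_(p,q) read on the frame at q, as a function of h = p^-1 q. *)
Definition frame_alpha h : R3 :=
  let s := h.1.1 ^+ 2 + h.1.2 ^+ 2 in
  ((2 * h.1.1 * s - 8 * h.1.2 * h.2) / anorm2 h,
   (2 * h.1.2 * s + 8 * h.1.1 * h.2) / anorm2 h,
   16 * h.2 / anorm2 h).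

Definition frame_norm2 a : R := (a.1.1 ^+ 2 + a.1.2 ^+ 2) ^+ 2 + a.2 ^+ 2.

(* Since |a1 + i a2|^2 - i c = 4 / conj rho, rho is recovered from a, and then
   zeta = (a1 + i a2) rho / 2. *)
Definition frame_alpha_inv a : heis R :=
  let s := a.1.1 ^+ 2 + a.1.2 ^+ 2 in
  (2 * (a.1.1 * s + a.1.2 * a.2) / frame_norm2 a,
   2 * (a.1.2 * s - a.1.1 * a.2) / frame_norm2 a,
   a.2 / frame_norm2 a).

Lemma anorm2_eq0 h : anorm2 h = 0 -> h = (0, 0, 0).
Proof.
move: h => [[x y] u]; rewrite /anorm2 /Afun /= => h0.
have s0 : x ^+ 2 + y ^+ 2 = 0 by nra.
have -> : u = 0 by nra.
have -> : x = 0 by nra.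
by have -> : y = 0 by nra.
Qed.

Lemma anorm2_neq0 h : anorm2 h != 0 <-> h <> (0, 0, 0).
Proof.
split=> [/eqP N0 h0|h0]; last by apply/eqP => /anorm2_eq0.
by apply: N0; rewrite h0 /anorm2 /Afun /=; ring.
Qed.

Lemma frame_norm2_neq0 a : a <> (0, 0, 0) -> frame_norm2 a != 0.
Proof.
move: a => [[a1 a2] c] a0; apply/eqP; rewrite /frame_norm2 /= => D0; apply: a0.
have s0 : a1 ^+ 2 + a2 ^+ 2 = 0 by nra.
have -> : c = 0 by nra.
have -> : a1 = 0 by nra.
by have -> : a2 = 0 by nra.
Qed.

Lemma frame_norm2_alpha h : h <> (0, 0, 0) -> frame_norm2 (frame_alpha h) = 16 / anorm2 h.
Proof.
move=> /anorm2_neq0; move: h => [[x y] u].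
by rewrite /frame_norm2 /frame_alpha /anorm2 /Afun /= => N0; field.
Qed.

Lemma anorm2_alpha_inv a : a <> (0, 0, 0) -> anorm2 (frame_alpha_inv a) = 16 / frame_norm2 a.
Proof.
move=> /frame_norm2_neq0; move: a => [[a1 a2] c].
by rewrite /frame_alpha_inv /anorm2 /Afun /frame_norm2 /= => D0; field.
Qed.

Lemma frame_alphaK h : h <> (0, 0, 0) -> frame_alpha_inv (frame_alpha h) = h.
Proof.
move=> h0; rewrite /frame_alpha_inv frame_norm2_alpha //.
move/anorm2_neq0: h0; move: h => [[x y] u].
by rewrite /frame_alpha /anorm2 /Afun /= => N0; congr (_, _, _); field.
Qed.

Lemma frame_alpha_invK a : a <> (0, 0, 0) -> frame_alpha (frame_alpha_inv a) = a.
Proof.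
move=> a0; rewrite /frame_alpha anorm2_alpha_inv //.
move/frame_norm2_neq0: a0; move: a => [[a1 a2] c].
by rewrite /frame_alpha_inv /frame_norm2 /= => D0; congr (_, _, _); field.
Qed.

Lemma frame_alpha_neq0 h : h <> (0, 0, 0) -> frame_alpha h <> (0, 0, 0).
Proof.
move=> h0 a0; apply: (h0); rewrite -(frame_alphaK h0) a0.
by rewrite /frame_alpha_inv /=; congr (_, _, _); rewrite !(mul0r, mulr0, addr0, subr0).
Qed.

Lemma frame_alpha_inv_neq0 a : a <> (0, 0, 0) -> frame_alpha_inv a <> (0, 0, 0).
Proof.
move=> a0 h0; apply: (a0); rewrite -(frame_alpha_invK a0) h0.
by rewrite /frame_alpha /=; congr (_, _, _); rewrite !(mul0r, mulr0, addr0, subr0).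
Qed.

Lemma c6K i : (i < 6)%N -> c6 i = i :> nat.
Proof. exact: inordK. Qed.

Lemma e6E k i : (i < 6)%N -> e6 R k 0 (c6 i) = if i == k then 1 else 0.
Proof. by move=> i6; rewrite mxE c6K. Qed.

Lemma e6_delta (k : 'I_6) : e6 R k = delta_mx 0 k.
Proof.
apply/rowP => l; rewrite !mxE eqxx /=.
by have -> : (l == k) = (nat_of_ord l == nat_of_ord k) by []; case: ifP.
Qed.

Lemma mk6E p q (k : 'I_6) : mk6 p q 0 k = [:: p.1.1; p.1.2; p.2; q.1.1; q.1.2; q.2]`_k.
Proof. by rewrite mxE. Qed.

Lemma first_mk6 p q : first (mk6 p q) = p.
Proof. by move: p => [[? ?] ?]; rewrite /first !mk6E !c6K. Qed.

Lemma second_mk6 p q : second (mk6 p q) = q.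
Proof. by move: q => [[? ?] ?]; rewrite /second !mk6E !c6K. Qed.

Lemma mk6_first_second X : mk6 (first X) (second X) = X.
Proof.
apply/matrixP => i k; rewrite ord1 mk6E.
by case: k => -[|[|[|[|[|[|//]]]]]] k6; congr (X 0 _); apply/val_inj; rewrite /= c6K.
Qed.

Lemma nonzero_covE Y : nonzero_cov Y <-> second Y <> (0, 0, 0).
Proof.
rewrite /nonzero_cov /second; split=> [|Y0].
  by case=> [|[]] Yk0 [] => *; apply: Yk0.
have [y3|] := eqVneq (Y 0 (c6 3)) 0; last by left; apply/eqP.
have [y4|] := eqVneq (Y 0 (c6 4)) 0; last by right; left; apply/eqP.
have [y5|] := eqVneq (Y 0 (c6 5)) 0; last by right; right; apply/eqP.
by exfalso; apply: Y0; rewrite y3 y4 y5.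
Qed.

Local Notation x_ i := (@RVar R 6 (c6 i)).

Definition rho_re_expr : rexpr R 6 :=
  let dx := RAdd (x_ 3) (ROpp (x_ 0)) in let dy := RAdd (x_ 4) (ROpp (x_ 1)) in
  RAdd (RMul dx dx) (RMul dy dy).

Definition rho_im_expr : rexpr R 6 :=
  RMul (RConst (-4)%R) (RAdd (RAdd (x_ 5) (ROpp (x_ 2)))
    (ROpp (RMul (RConst 2^-1%R) (RAdd (RMul (x_ 0) (x_ 4)) (ROpp (RMul (x_ 1) (x_ 3))))))).

Definition rho_norm2_expr : rexpr R 6 :=
  RAdd (RMul rho_re_expr rho_re_expr) (RMul rho_im_expr rho_im_expr).

(* alpha_j = (1/2) d/dq_j log |rho|^2 *)
Definition alpha_expr (j : nat) : rexpr R 6 :=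
  RMul (RConst 2^-1%R) (rlogderiv rho_norm2_expr (e6 R (3 + j))).

Lemma rho6_reval X : rho6 X = (reval rho_re_expr X, reval rho_im_expr X).
Proof.
by rewrite /rho6 /rho /Afun /hmul /hinv /cIm /cmul /first /second /=; congr (_, _); ring.
Qed.

Lemma alpha_reval j X : alpha j X = reval (alpha_expr j) X.
Proof.
rewrite /alpha /dqlog /cpartial.
have -> : (fun Y => cRe (rho6 Y)) = reval rho_re_expr by apply/funext => Y; rewrite rho6_reval.
have -> : (fun Y => cIm (rho6 Y)) = reval rho_im_expr by apply/funext => Y; rewrite rho6_reval.
by rewrite !reval_derive // rho6_reval /alpha_expr /rho_norm2_expr reval_re_logderiv.
Qed.

Lemma reval_rho_norm2 X : reval rho_norm2_expr X = anorm2 (hmul (hinv (first X)) (second X)).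
Proof. by rewrite /anorm2 -[Afun _]/(rho6 X) rho6_reval /= !expr2. Qed.

Lemma offdiagE X : offdiag X <-> reval rho_norm2_expr X != 0.
Proof.
rewrite reval_rho_norm2 anorm2_neq0 /offdiag; split=> [pq /hmul_hinv_eq0 //|h0 pq].
by apply: h0; rewrite pq hmulVh.
Qed.

Lemma offdiag_hdiff X : offdiag X -> hmul (hinv (first X)) (second X) <> (0, 0, 0).
Proof. by move=> pq /hmul_hinv_eq0. Qed.

Lemma rdefined_alpha_expr j X : offdiag X -> rdefined (alpha_expr j) X.
Proof. by move=> /offdiagE N0; do !split => //; apply: rdefined_rderiv. Qed.

Definition alpha3 X : R3 := (alpha 0 X, alpha 1 X, alpha 2 X).

Lemma alpha_frame X : offdiag X ->
  to_frame (second X) (alpha3 X) = frame_alpha (hmul (hinv (first X)) (second X)).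
Proof.
move=> /offdiagE; rewrite reval_rho_norm2 /alpha3 !alpha_reval /= !e6E //=.
rewrite /to_frame /frame_alpha /anorm2 /Afun /hmul /hinv /cIm /cmul /first /second /=.
by move=> N0; congr (_, _, _); field; apply: contra N0 => /eqP N0; apply/eqP; lra.
Qed.

Lemma FmapE X : Fmap X = mk6 (second X) (alpha3 X).
Proof. by []. Qed.

Definition Finv Y : pt6 R :=
  mk6 (hmul (first Y) (hinv (frame_alpha_inv (to_frame (first Y) (second Y))))) (first Y).

Lemma Fmap_nonzero_cov X : offdiag X -> nonzero_cov (Fmap X).
Proof.
move=> pq; apply/nonzero_covE; rewrite FmapE second_mk6 -(to_frame_eq0 (second X)).
by rewrite alpha_frame //; exact/frame_alpha_neq0/offdiag_hdiff.
Qed.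

Lemma Finv_offdiag Y : nonzero_cov Y -> offdiag (Finv Y).
Proof.
move=> /nonzero_covE xi0; rewrite /offdiag /Finv /= first_mk6 second_mk6 => pq.
apply: (@frame_alpha_inv_neq0 (to_frame (first Y) (second Y))); first by move/to_frame_eq0.
by rewrite -[frame_alpha_inv _](hinv_hmulK (first Y)) pq hmulVh.
Qed.

Lemma FmapK X : offdiag X -> Finv (Fmap X) = X.
Proof.
move=> pq; rewrite /Finv FmapE first_mk6 second_mk6 alpha_frame //.
by rewrite frame_alphaK ?hmul_hinvKV ?mk6_first_second //; exact: offdiag_hdiff.
Qed.

Lemma FinvK Y : nonzero_cov Y -> Fmap (Finv Y) = Y.
Proof.
move=> Y0; have pq := Finv_offdiag Y0; move/nonzero_covE: Y0 => xi0.
rewrite FmapE -[alpha3 _](to_frameK (second (Finv Y))) alpha_frame //.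
rewrite /Finv first_mk6 second_mk6 hinv_hmulK frame_alpha_invK ?to_frameK ?mk6_first_second //.
by move/to_frame_eq0.
Qed.

Lemma offdiag_open : open (@offdiag R).
Proof.
have -> : @offdiag R = [set X | reval rho_norm2_expr X != 0].
  by apply/seteqP; split=> X /offdiagE.
by apply: rational_on_open_neq0; exists rho_norm2_expr.
Qed.

Lemma nonzero_cov_open : open (@nonzero_cov R).
Proof.
have ocoord k : open [set Y : pt6 R | Y 0 k != 0].
  by apply: rational_on_open_neq0; exact: rational_on_coord.
have -> : @nonzero_cov R = [set Y | Y 0 (c6 3) != 0] `|`
    ([set Y | Y 0 (c6 4) != 0] `|` [set Y | Y 0 (c6 5) != 0]).
  apply/seteqP; split=> Y; rewrite /nonzero_cov /setU /=.
    by case=> [|[]] /eqP; [left|right; left|right; right].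
  by case=> [|[]] /eqP; [left|right; left|right; right].
exact: (openU (ocoord _) (openU (ocoord _) (ocoord _))).
Qed.

Lemma rational_on_mk6 (U : set (pt6 R)) (f g : pt6 R -> heis R) :
  rational_on U (fun Y => (f Y).1.1) -> rational_on U (fun Y => (f Y).1.2) ->
  rational_on U (fun Y => (f Y).2) -> rational_on U (fun Y => (g Y).1.1) ->
  rational_on U (fun Y => (g Y).1.2) -> rational_on U (fun Y => (g Y).2) ->
  forall k, rational_on U (fun Y => mk6 (f Y) (g Y) 0 k).
Proof.
move=> rf1 rf2 rf3 rg1 rg2 rg3 k.
have -> : (fun Y => mk6 (f Y) (g Y) 0 k) = fun Y =>
    [:: (f Y).1.1; (f Y).1.2; (f Y).2; (g Y).1.1; (g Y).1.2; (g Y).2]`_k.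
  by apply/funext => Y; rewrite mk6E.
by case: k => -[|[|[|[|[|[|//]]]]]].
Qed.

Lemma alpha_rational j : rational_on (@offdiag R) (alpha j).
Proof.
by exists (alpha_expr j) => X pq; split; [exact: rdefined_alpha_expr|exact: alpha_reval].
Qed.

Lemma Fmap_smooth : smooth_on (@offdiag R) (@Fmap R).
Proof.
apply: (rational_rows_smooth offdiag_open).
by apply: rational_on_mk6; (apply: rational_on_coord || apply: alpha_rational).
Qed.

Lemma Finv_smooth : smooth_on (@nonzero_cov R) Finv.
Proof.
have D0 Y : nonzero_cov Y -> frame_norm2 (to_frame (first Y) (second Y)) != 0.
  by move=> /nonzero_covE xi0; apply: frame_norm2_neq0 => /to_frame_eq0.
apply: (rational_rows_smooth nonzero_cov_open).
apply: rational_on_mk6;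
  rewrite /hmul /hinv /frame_alpha_inv /to_frame /cIm /cmul /first /second /=;
  repeat first [ apply: rational_on_cst | apply: rational_on_coord | apply: rational_onD
               | apply: rational_onM | apply: rational_onN | apply: rational_onX
               | apply: rational_onV ];
  exact: D0.
Qed.

Lemma alpha_derive j X v : offdiag X ->
  'D_v (alpha j) X = reval (rderiv (alpha_expr j) v) X.
Proof.
move=> pq; rewrite (funext (@alpha_reval j)) reval_derive //.
exact: rdefined_alpha_expr.
Qed.

(* [etrans] rather than [rewrite]: failed matches between ['D] terms unfold
   the underlying limits and are very slow. *)
Lemma alpha_derive_sym j k X : offdiag X ->
  'D_(e6 R (3 + k)) (alpha j) X = 'D_(e6 R (3 + j)) (alpha k) X.
Proof.
move=> pq; apply: etrans (alpha_derive _ _ pq) _; apply: esym.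
apply: etrans (alpha_derive _ _ pq) _.
by rewrite /alpha_expr !reval_rderiv_scale reval_rderiv_logderivC.
Qed.

Lemma alpha_derive_expand j X v : offdiag X ->
  'D_v (alpha j) X = \sum_(k < 6) v 0 (c6 k) * 'D_(e6 R k) (alpha j) X.
Proof.
move=> pq; rewrite derive_row_sum; last first.
  exact (rational_on_differentiable offdiag_open (alpha_rational j) pq).
by apply: eq_bigr => k _; rewrite e6_delta /c6 inord_val.
Qed.

Lemma Fmap_derive X v j : offdiag X -> (j < 3)%N ->
  'D_v (@Fmap R) X 0 (c6 j) = v 0 (c6 (3 + j)) /\
  'D_v (@Fmap R) X 0 (c6 (3 + j)) = 'D_v (alpha j) X.
Proof.
move=> pq j3; have [dF _] := Fmap_smooth 1.
have Fk k : (k < 6)%N -> (fun Y => Fmap Y 0 (c6 k)) = fun Y =>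
    [:: Y 0 (c6 3); Y 0 (c6 4); Y 0 (c6 5); alpha 0 Y; alpha 1 Y; alpha 2 Y]`_k.
  by move=> k6; apply/funext => Y; rewrite FmapE mk6E c6K.
by case: j j3 => [|[|[|//]]] _; rewrite !derive_row ?Fk ?derive_coord //; exact: dF.
Qed.

Lemma ReOmega_pullback X (a b : pt6 R) : offdiag X ->
  ReOmega X a b = omega_can ('D_a (@Fmap R) X) ('D_b (@Fmap R) X).
Proof.
move=> pq; pose d i j : R := 'D_(e6 R i) (alpha j) X.
pose A i := a 0 (c6 i); pose B i := b 0 (c6 i).
transitivity (\sum_(j < 3) ((\sum_(k < 6) A k * d k j) * B (3 + j)%N -
                            (\sum_(k < 6) B k * d k j) * A (3 + j)%N)).
  rewrite pullback_pairing_sum; last by move=> j k; exact: alpha_derive_sym.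
  by rewrite /ReOmega; apply: eq_bigr => i _; apply: eq_bigr => j _.
apply: eq_bigr => -[j j3] _ /=.
have [Da0 Da3] := Fmap_derive a pq j3; have [Db0 Db3] := Fmap_derive b pq j3.
congr (_ * _ - _ * _).
- by rewrite Da3 (alpha_derive_expand j a pq).
- by rewrite Db0.
- by rewrite Db3 (alpha_derive_expand j b pq).
- by rewrite Da0.
Qed.

End Heisenberg.

Theorem proposition6p4 (R : realType) :
  (* (1) F is a diffeomorphism from (H x H) \ Delta onto T*H \ 0_H *)
  ((forall X, @offdiag R X -> @nonzero_cov R (Fmap X)) /\
   exists G : pt6 R -> pt6 R,
     (forall Y, @nonzero_cov R Y -> @offdiag R (G Y)) /\
     (forall X, @offdiag R X -> G (Fmap X) = X) /\
     (forall Y, @nonzero_cov R Y -> Fmap (G Y) = Y) /\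
     smooth_on (@offdiag R) (@Fmap R) /\
     smooth_on (@nonzero_cov R) G) /\
  (* (2) Re Omega_H = F^* omega_can *)
  (forall X, @offdiag R X -> forall a b : pt6 R,
     ReOmega X a b = omega_can ('D_a (@Fmap R) X) ('D_b (@Fmap R) X)).
Proof.
split; last by move=> X pq a b; exact: ReOmega_pullback.
split; first exact: Fmap_nonzero_cov.
exists (@Finv R); split; first exact: Finv_offdiag.
split; first exact: FmapK.
split; first exact: FinvK.
by split; [exact: Fmap_smooth|exact: Finv_smooth].
Qed.
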